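(* With $I_p$, $\mathcal S_p^{s,t}$ and $\mathcal U_p^{s,t}$ as defined in the context, $$\inf\Big\{I_p(f):\ f\in\bigcup_{t>0}\bigcap_{s>0}\mathcal S_p^{s,t}\Big\}\ \ge\ \inf_{t>0}\ \sup_{s>0}\ \inf_{f\in\mathcal U_p^{s,t}}I_p(f);$$ consequently the decay rate $J_p:=-\lim_{n\to\infty}\frac1n\log\mathbb P(Q_{\ell,n}>nb)$, which equals the left-hand side, satisfies $J_p\ge\inf_{t>0}\sup_{s>0}\inf_{f\in\mathcal U_p^{s,t}}I_p(f)$.
   Context: Priority queue: a link of rate $nc$ serves $n$ i.i.d. high-priority (hp) Gaussian sources and $n$ i.i.d. low-priority (lp) Gaussian sources, the classes independent. Each hp source is a Gaussian process $A_{h}$ on $\mathbb R$ with continuous paths, $A_h(0)=0$, stationary increments, $\mathbb E A_h(t)=\mu_ht$, $\mathrm{Var}(A_h(t)-A_h(s))=v_h(|t-s|)$; similarly lp sources with $\mu_\ell$, $v_\ell$; $\mu_h+\mu_\ell<c$; $v_h,v_\ell$ continuous, vanishing at 0, and $o(t^\alpha)$ for some $\alpha<2$. $A(s,t):=A(t)-A(s)$. $\Omega$: continuous $\omega:\mathbb R\to\mathbb R$ with $\omega(0)=0$, $\omega(t)/(1+|t|)\to0$ as $t\to\pm\infty$. $R_h,R_\ell$: reproducing kernel Hilbert spaces of the covariance functions $\Gamma_h(s,t)=\tfrac12(v_h(|s|)+v_h(|t|)-v_h(|t-s|))$ and $\Gamma_\ell$ (defined analogously). For $f=(f_h,f_\ell)\in\Omega\times\Omega$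 let $\bar f_h(t):=f_h(t)-\mu_ht$, $\bar f_\ell(t):=f_\ell(t)-\mu_\ell t$ and $I_p(f):=\frac12\|\bar f_h\|_{R_h}^2+\frac12\|\bar f_\ell\|_{R_\ell}^2$ (infinite unless $\bar f_h\in R_h$, $\bar f_\ell\in R_\ell$). Fix $b>0$. For $s,t>0$: $\mathcal S_p^{s,t}:=\{f\in\Omega\times\Omega: f_h(-s)-f_h(-t)-f_\ell(-t)>b+c(t-s)\}$, $\mathcal U_p^{s,t}:=\{f\in\Omega\times\Omega: -f_h(-t)-f_\ell(-t)\ge b+ct,\ f_h(-s)-f_h(-t)-f_\ell(-t)\ge b+c(t-s)\}$. $Q_{\ell,n}$ is the stationary low-priority queue content; $\mathbb P(Q_{\ell,n}>nb)$ equals the probability that the pair of empirical mean processes $(\frac1n\sum_{i=1}^nA_{h,i},\frac1n\sum_{i=1}^nA_{\ell,i})$ lies in $\bigcup_{t>0}\bigcap_{s>0}\mathcal S_p^{s,t}$. *)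

From HB Require Import structures.
From mathcomp Require Import all_boot all_order all_algebra.
From mathcomp Require Import all_classical all_reals all_analysis.
Set Implicit Arguments. Unset Strict Implicit. Unset Printing Implicit Defensive.
Import Order.TTheory GRing.Theory Num.Theory.
Import numFieldNormedType.Exports.
Local Open Scope classical_set_scope.
Local Open Scope ring_scope.

Section Defs.
Variable R : realType.

Definition Omega (w : R -> R) : Prop :=
  continuous w /\ w 0 = 0 /\
  (fun t => w t / (1 + `|t|)) @ +oo --> (0 : R) /\
  (fun t => w t / (1 + `|t|)) @ -oo --> (0 : R).

Definition Gamma (v : R -> R) (s t : R) : R :=
  (v `|s| + v `|t| - v `|t - s|) / 2.

Definition psd_kernel (K : R -> R -> R) : Prop :=
  forall (n : nat) (ts a : 'I_n -> R),
    0 <= \sum_(i < n) \sum_(j < n) a i * a j * K (ts i) (ts j).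

(* Squared RKHS norm of f for the kernel K (Aronszajn's characterization):
   ||f||^2 = sup { (sum_i a_i f(t_i))^2 : sum_{i,j} a_i a_j K(t_i,t_j) <= 1 },
   which is +oo exactly when f is not in the RKHS. *)
Definition rkhs_sqnorm (K : R -> R -> R) (f : R -> R) : \bar R :=
  ereal_sup [set x : \bar R | exists (n : nat) (ts a : 'I_n -> R),
     \sum_(i < n) \sum_(j < n) a i * a j * K (ts i) (ts j) <= 1 /\
     x = ((\sum_(i < n) a i * f (ts i)) ^+ 2)%:E].

Definition Ip (mu_h mu_l : R) (v_h v_l : R -> R) (fh fl : R -> R) : \bar R :=
  let gh := fun t => fh t - mu_h * t in
  let gl := fun t => fl t - mu_l * t in
  ((2^-1)%:E * rkhs_sqnorm (Gamma v_h) gh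
   + (2^-1)%:E * rkhs_sqnorm (Gamma v_l) gl)%E.

Definition Sp (b c s t : R) (fh fl : R -> R) : Prop :=
  fh (- s) - fh (- t) - fl (- t) > b + c * (t - s).

Definition Up (b c s t : R) (fh fl : R -> R) : Prop :=
  - fh (- t) - fl (- t) >= b + c * t /\
  fh (- s) - fh (- t) - fl (- t) >= b + c * (t - s).

Definition lhs_rate (mu_h mu_l c b : R) (v_h v_l : R -> R) : \bar R :=
  ereal_inf [set Ip mu_h mu_l v_h v_l f.1 f.2 | f in
    [set f : (R -> R) * (R -> R) | Omega f.1 /\ Omega f.2 /\
       exists t, 0 < t /\ forall s, 0 < s -> Sp b c s t f.1 f.2]].

Definition rhs_rate (mu_h mu_l c b : R) (v_h v_l : R -> R) : \bar R :=
  ereal_inf [set ereal_sup [set ereal_inf [set Ip mu_h mu_l v_h v_l f.1 f.2 | f in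
        [set f : (R -> R) * (R -> R) | Omega f.1 /\ Omega f.2 /\ Up b c s t f.1 f.2]]
      | s in [set s : R | 0 < s]]
    | t in [set t : R | 0 < t]].

Definition variance_ok (v : R -> R) : Prop :=
  continuous v /\ v 0 = 0 /\ psd_kernel (Gamma v) /\
  exists alpha : R, alpha < 2 /\ (fun t => v t / t `^ alpha) @ +oo --> (0 : R).

End Defs.

From HB Require Import structures.
From mathcomp Require Import all_boot all_order all_algebra.
From mathcomp Require Import all_classical all_reals all_analysis.
From mathcomp Require Import lra.
Import Order.TTheory GRing.Theory Num.Theory.
Import numFieldNormedType.Exports.
Local Open Scope classical_set_scope.
Local Open Scope ring_scope.

(* If f lies in S_p^{s,t} for every s > 0, it lies in every U_p^{s,t}: the second
   inequality is a weakening, and letting s decrease to 0 in the strict one,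
   continuity of f_h at 0 and f_h(0) = 0 give the first.  Hence I_p(f) dominates
   inf_{U_p^{s,t}} I_p for every s > 0, and the bound follows by taking sup over s,
   inf over t and inf over f. *)

Lemma le_continuous_at_right (R : realFieldType) (g : R -> R) (x a : R) :
  {for x, continuous g} -> (forall s, x < s -> a <= g s) -> a <= g x.
Proof.
move=> gx ag; apply: (cvgr_to_ge (cvg_at_right_filter gx)).
by near=> s; apply: ag; near: s; exact: nbhs_right_gt.
Unshelve. all: by end_near. Qed.

Lemma ereal_inf_sup_inf_le (R : realType) (X S T : Type) (I : X -> \bar R)
    (A : set X) (B : S -> T -> set X) (Ss : set S) (Ts : set T) :
  (forall f, A f -> exists2 t, Ts t & forall s, Ss s -> B s t f) ->
  (ereal_inf [set ereal_sup [set ereal_inf (I @` B s t) | s in Ss] | t in Ts]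
     <= ereal_inf (I @` A))%E.
Proof.
move=> AB; apply: le_ereal_inf_tmp => _ [f Af <-].
have [t Tt Bt] := AB f Af.
apply: (le_trans (ereal_inf_lbound _)); first by exists t.
apply: ge_ereal_sup => _ [s Ss_s <-].
by apply: ereal_inf_lbound; exists f => //; exact: Bt.
Qed.

Lemma bigcap_Sp_subset_Up (R : realType) (b c t : R) (fh fl : R -> R) :
  {for 0, continuous fh} -> fh 0 = 0 ->
  (forall s, 0 < s -> Sp b c s t fh fl) ->
  forall s, 0 < s -> Up b c s t fh fl.
Proof.
move=> fh_cont fh0 inS s s_gt0; split; last exact/ltW/inS.
pose g r := fh (- r) + c * r.
have g_cont : {for 0, continuous g}.
  apply: continuousD; last by apply: continuousM; [exact: cst_continuous | exact: cvg_id].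
  by apply: continuous_comp; [exact: oppr_continuous | rewrite oppr0].
have : b + c * t + fh (- t) + fl (- t) <= g 0.
  apply: le_continuous_at_right => // r /inS; rewrite /Sp /g; lra.
by rewrite /g oppr0 fh0 mulr0 addr0; lra.
Qed.

Theorem theorem5p2 (R : realType) (mu_h mu_l c b : R) (v_h v_l : R -> R)
  (hb : 0 < b) (hmu : mu_h + mu_l < c)
  (hvh : variance_ok v_h) (hvl : variance_ok v_l) :
  (rhs_rate mu_h mu_l c b v_h v_l <= lhs_rate mu_h mu_l c b v_h v_l)%E.
Proof.
rewrite /rhs_rate /lhs_rate.
apply: ereal_inf_sup_inf_le => -[fh fl] /= [Oh [Ol [t [t_gt0 inS]]]].
exists t => // s s_gt0; split=> //; split=> //.
have [fh_cont [fh0 _]] := Oh.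
exact: bigcap_Sp_subset_Up (fh_cont 0) fh0 inS s s_gt0.
Qed.
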